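(* Let $A$ be a rational $m\times n$ matrix of full row rank with $m\geq 2$, and let $r=A_i$ be a row of $A$ all of whose entries lie in $\{0,1,-1\}$. Then $A$ is equimodular if and only if the trim $A/\!\!/(i,j)$ is equimodular for every $j\in\operatorname{supp}(r)$.
   Context: An $m\times n$ matrix is equimodular if it has full row rank $m$ and all its nonzero $m\times m$ minors have the same absolute value. $\operatorname{supp}(x)$ is the set of indices of nonzero coordinates of $x$. For a position $p=(i,j)$ with $A_i^j\neq0$, the pivot $A/p$ is obtained from $A$ by dividing row $i$ by $A_i^j$ and adding suitable multiples of this new row to the other rows so that column $j$ becomes the $i$-th unit vector; the trim $A/\!\!/p$ is obtained from $A/p$ by deleting row $i$ and column $j$. *)

From HB Require Import structures.
From mathcomp Require Import all_boot all_order all_algebra.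
Set Implicit Arguments. Unset Strict Implicit. Unset Printing Implicit Defensive.
Import Order.TTheory GRing.Theory Num.Theory.
Local Open Scope ring_scope.

(* The m x m minor of A : 'M_(m,n) on the columns selected by f : 'I_m -> 'I_n.
   (Non-injective f give 0; up to sign, every m x m minor arises this way.) *)
Definition minor (F : comNzRingType) (m n : nat) (A : 'M[F]_(m, n))
  (f : 'I_m -> 'I_n) : F := \det (colsub f A).

Definition equimodular (m n : nat) (A : 'M[rat]_(m, n)) : Prop :=
  \rank A = m /\
  forall f g : 'I_m -> 'I_n, minor A f != 0 -> minor A g != 0 ->
    `|minor A f| = `|minor A g|.

Definition pivot (F : fieldType) (m n : nat) (A : 'M[F]_(m, n))
  (i : 'I_m) (j : 'I_n) : 'M[F]_(m, n) :=
  \matrix_(k, l) (if k == i then A i l / A i j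
                  else A k l - A k j * (A i l / A i j)).

Definition trim (F : fieldType) (m n : nat) (A : 'M[F]_(m, n))
  (i : 'I_m) (j : 'I_n) : 'M[F]_(m.-1, n.-1) :=
  row' i (col' j (pivot A i j)).

From HB Require Import structures.
From mathcomp Require Import all_boot all_order all_algebra.
From mathcomp Require Import ring.
Import Order.TTheory GRing.Theory Num.Theory.

Set Implicit Arguments.
Unset Strict Implicit.
Unset Printing Implicit Defensive.
Local Open Scope ring_scope.

(* Pivoting on (i, j) is left multiplication by a matrix of determinant
   (A i j)^-1, so it scales all m x m minors alike.  Column j of the pivot is
   the unit vector e_i, so the minors of the pivot through column j are, up to
   sign, exactly the minors of the trim, and expanding any minor of the pivot
   along row i expresses it as a combination of trim minors with the entries
   of the pivot row as coefficients.  This gives the forward direction.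
   Conversely, when the pivot row is integral and the nonzero trim minors
   share the absolute value c, every nonzero minor of the pivot is a nonzero
   integer multiple of c, and the minors through column j have absolute value
   exactly c.  Since every nonzero minor of A uses some column of supp(A_i),
   any two nonzero minors of A bound each other. *)

Definition equinorm_minors (R : numDomainType) (m n : nat) (A : 'M[R]_(m, n)) :=
  forall f g : 'I_m -> 'I_n, minor A f != 0 -> minor A g != 0 ->
    `|minor A f| = `|minor A g|.

Section Determinants.

Variable R : comNzRingType.

Lemma det_col0 p (M : 'M[R]_p) (c : 'I_p) : (forall l, M l c = 0) -> \det M = 0.
Proof. by move=> M0; rewrite (expand_det_col _ c) big1 // => l _; rewrite M0 mul0r. Qed.

Lemma det_unit_col p (M : 'M[R]_p) (r c : 'I_p) : (forall l, M l c = (l == r)%:R) ->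
  \det M = (-1) ^+ (r + c) * \det (row' r (col' c M)).
Proof.
move=> Me; rewrite (expand_det_col _ c) (bigD1 r) //= big1 ?addr0.
  by rewrite Me eqxx mul1r.
by move=> l /negPf rl; rewrite Me rl mul0r.
Qed.

Lemma det_id_but_col p (M : 'M[R]_p) (c : 'I_p) :
  (forall k l, l != c -> M k l = (k == l)%:R) -> \det M = M c c.
Proof.
move=> Me; rewrite (expand_det_col _ c) (bigD1 c) //= big1 ?addr0 => [|k kc].
  rewrite /cofactor -signr_odd oddD addbb mul1r.
  suff -> : row' c (col' c M) = 1%:M by rewrite det1 mulr1.
  by apply/matrixP => a b; rewrite !mxE Me ?(inj_eq lift_inj) // eq_sym neq_lift.
case: (unliftP c k) => [b kb|kc']; last by rewrite kc' eqxx in kc.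
rewrite /cofactor (@det_col0 _ _ b) ?mulr0 // => a.
rewrite !mxE Me; last by rewrite eq_sym neq_lift.
by rewrite -kb eq_sym (negPf (neq_lift _ _)).
Qed.

Lemma det_neq0_cofactor p (M : 'M[R]_p) (r : 'I_p) : \det M != 0 ->
  exists k, M r k * cofactor M r k != 0.
Proof.
rewrite (expand_det_row _ r) => nz0; apply/existsP; apply: contraNT nz0.
by move=> /existsPn all0; apply/eqP/big1 => k _; apply/eqP/negbNE/all0.
Qed.

End Determinants.

Lemma full_row_rank_minorP (F : fieldType) (m n : nat) (A : 'M[F]_(m, n)) :
  \rank A = m <-> exists f, minor A f != 0.
Proof.
split=> [rA | [f Af]].
  have fA : row_full A^T by rewrite /row_full mxrank_tr rA.
  exists (fullrankfun fA); have := fullrowsub_unit fA.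
  by rewrite -[rowsub _ _]trmx_mxsub unitmxE det_tr unitfE.
apply/eqP; rewrite eqn_leq rank_leq_row /=.
have rf : \rank (colsub f A) = m by apply: mxrank_unit; rewrite unitmxE unitfE.
by rewrite -{1}rf -[A in colsub f A]mulmx1 -mulmx_colsub mxrankM_maxl.
Qed.

Section Pivot.

Variables (F : fieldType) (m n : nat) (A : 'M[F]_(m, n)) (i : 'I_m) (j : 'I_n).
Hypothesis Aij : A i j != 0.

Definition pivot_elim_mx : 'M[F]_m :=
  1%:M + \matrix_(k, l) ((l == i)%:R *
                         if k == i then (A i j)^-1 - 1 else - (A k j / A i j)).

Lemma pivot_mulmx : pivot A i j = pivot_elim_mx *m A.
Proof.
apply/matrixP => k c; rewrite mulmxDl mul1mx !mxE (bigD1 i) //= big1 => [|l /negPf li].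
  by rewrite !mxE eqxx mul1r addr0; case: eqP => [->|_]; field.
by rewrite mxE li !mul0r.
Qed.

Lemma det_pivot_elim_mx : \det pivot_elim_mx = (A i j)^-1.
Proof.
rewrite (@det_id_but_col _ _ _ i) => [|k l /negPf li]; rewrite !mxE ?li ?mul0r ?addr0 //.
by rewrite !eqxx mul1r addrC subrK.
Qed.

Lemma minor_pivot f : minor (pivot A i j) f = (A i j)^-1 * minor A f.
Proof. by rewrite /minor pivot_mulmx -mulmx_colsub det_mulmx det_pivot_elim_mx. Qed.

Lemma pivot_unit_col k : pivot A i j k j = (k == i)%:R.
Proof. by rewrite mxE; case: eqP; rewrite divff // ?mulr1 subrr. Qed.

Lemma trim_minor_pivot g : exists f, minor (trim A i j) g = minor (pivot A i j) f.
Proof.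
exists (fun k => if unlift i k is Some l then lift j (g l) else j).
rewrite /minor (@det_unit_col _ _ _ i i) => [|l]; last first.
  by rewrite mxE unlift_none pivot_unit_col.
rewrite -signr_odd oddD addbb mul1r; congr (\det _).
by apply/matrixP => a b; rewrite !mxE liftK.
Qed.

Lemma pivot_cofactor_trim f k :
  \det (row' i (col' k (colsub f (pivot A i j)))) != 0 ->
  exists g, \det (row' i (col' k (colsub f (pivot A i j)))) = minor (trim A i j) g.
Proof.
move=> nz; suff /fin_all_exists[g fg] : forall l, exists y, f (lift k l) = lift j y.
  by exists g; congr (\det _); apply/matrixP => a b; rewrite !mxE fg.
move=> l; case: (unliftP j (f (lift k l))) => [y ->|fj]; first by exists y.
case/eqP: nz; apply: (@det_col0 _ _ _ l) => a.
move: (pivot_unit_col (lift i a)); rewrite !mxE fj => ->.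
by rewrite eq_sym (negPf (neq_lift _ _)).
Qed.

End Pivot.

Lemma rank_trim (F : fieldType) (m n : nat) (A : 'M[F]_(m, n)) i j :
  A i j != 0 -> \rank A = m -> \rank (trim A i j) = m.-1.
Proof.
move=> Aij /full_row_rank_minorP[f Af].
have Pf : minor (pivot A i j) f != 0 by rewrite minor_pivot // mulf_neq0 ?invr_eq0.
have [k] := det_neq0_cofactor i Pf; rewrite /cofactor !mulf_eq0 !negb_or => /and3P[_ _ nzD].
have [g Dg] := pivot_cofactor_trim Aij nzD.
by apply/full_row_rank_minorP; exists g; rewrite -Dg.
Qed.

Lemma pivot_minor_unit_col (F : fieldType) (m n : nat) (A : 'M[F]_(m, n)) i j f k :
  A i j != 0 -> f k = j -> minor (pivot A i j) f != 0 ->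
  exists g, minor (pivot A i j) f = (-1) ^+ (i + k) * minor (trim A i j) g.
Proof.
move=> Aij fk Pf; have Pe := @det_unit_col _ _ (colsub f (pivot A i j)) i k.
rewrite /minor Pe => [|l]; last by rewrite mxE fk pivot_unit_col.
have [|g ->] := @pivot_cofactor_trim _ _ _ A i j Aij f k; last by exists g.
apply: contraNneq Pf => D0; rewrite /minor Pe ?D0 ?mulr0 // => l.
by rewrite mxE fk pivot_unit_col.
Qed.

Section Norms.

Variable R : numFieldType.

Lemma equinorm_pivot (m n : nat) (A : 'M[R]_(m, n)) i j : A i j != 0 ->
  equinorm_minors (pivot A i j) <-> equinorm_minors A.
Proof.
move=> Aij; have nzP f : (minor (pivot A i j) f != 0) = (minor A f != 0).
  by rewrite minor_pivot // mulf_eq0 invr_eq0 (negPf Aij).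
have normP f : `|minor (pivot A i j) f| = `|A i j|^-1 * `|minor A f|.
  by rewrite minor_pivot // normrM normfV.
split=> eqM f g Af Ag.
  apply: (mulfI (_ : `|A i j|^-1 != 0)); first by rewrite invr_eq0 normr_eq0.
  by rewrite -!normP (eqM f g) ?nzP.
by rewrite !normP (eqM f g) -?nzP.
Qed.

Lemma equinorm_trim (m n : nat) (A : 'M[R]_(m, n)) i j : A i j != 0 ->
  equinorm_minors A -> equinorm_minors (trim A i j).
Proof.
move=> Aij /(equinorm_pivot Aij) eqPM g1 g2.
have [f1 ->] := trim_minor_pivot Aij g1; have [f2 ->] := trim_minor_pivot Aij g2.
exact: eqPM.
Qed.

End Norms.

Lemma divr_norm_int (R : archiRealFieldType) (x y : R) :
  `|x| = `|y| -> x / `|y| \is a Num.int.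
Proof.
move=> <-; have [->|x0] := eqVneq x 0; first by rewrite mul0r rpred0.
rewrite {1}[x]numEsg mulfK ?normr_eq0 //.
by case: sgrP; rewrite ?rpred0 ?rpred1 ?rpredN1.
Qed.

Section IntegralPivotRow.

Variables (R : archiRealFieldType) (m n : nat) (A : 'M[R]_(m, n)) (i : 'I_m) (j : 'I_n).
Hypotheses (Aij : A i j != 0) (intP : forall l, A i l / A i j \is a Num.int).
Hypothesis eqT : equinorm_minors (trim A i j).

Lemma trim_minor_le_pivot_minor g f :
  minor (trim A i j) g != 0 -> minor (pivot A i j) f != 0 ->
  `|minor (trim A i j) g| <= `|minor (pivot A i j) f|.
Proof.
move=> Tg Pf; set c := `|minor (trim A i j) g|.
have c_gt0 : 0 < c by rewrite normr_gt0.
have Pf_int : minor (pivot A i j) f / c \is a Num.int.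
  rewrite /minor (expand_det_row _ i) mulr_suml; apply: rpred_sum => k _.
  rewrite /cofactor !mxE eqxx -mulrA; apply: rpredM => //; rewrite -mulrA; apply: rpredM.
    by rewrite -signr_odd; case: odd; rewrite ?rpredN1 ?rpred1.
  set D := \det _; have [->|D0] := eqVneq D 0; first by rewrite mul0r rpred0.
  have [h Dh] := pivot_cofactor_trim Aij D0.
  by apply: divr_norm_int; rewrite /D Dh; apply: eqT; rewrite -?Dh.
have Pf_c : minor (pivot A i j) f / c != 0 by rewrite mulf_neq0 // invr_eq0 gt_eqF.
have := norm_intr_ge1 Pf_int Pf_c.
by rewrite normrM normfV (gtr0_norm c_gt0) ler_pdivlMr // mul1r.
Qed.

Lemma minor_norm_le_through_pivot_col f g k : f k = j ->
  minor A f != 0 -> minor A g != 0 -> `|minor A f| <= `|minor A g|.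
Proof.
have nzP h : minor A h != 0 -> minor (pivot A i j) h != 0.
  by move=> Ah; rewrite minor_pivot // mulf_neq0 ?invr_eq0.
move=> fk /nzP Pf /nzP Pg; have [h Ph] := pivot_minor_unit_col Aij fk Pf.
have Th : minor (trim A i j) h != 0 by apply: contraNneq Pf; rewrite Ph => ->; rewrite mulr0.
have := trim_minor_le_pivot_minor Th Pg.
rewrite -[`|minor (trim A i j) h|]mul1r -(normr_sign _ (i + k)) -normrM -Ph.
by rewrite !minor_pivot // !normrM ler_pM2l // normr_gt0 invr_eq0.
Qed.

End IntegralPivotRow.

Lemma int_div_sign_entries (R : archiNumFieldType) (x y : R) :
  x \in [:: 0; 1; -1] -> y \in [:: 0; 1; -1] -> x / y \is a Num.int.
Proof.
rewrite !inE => /or3P[] /eqP-> /or3P[] /eqP->;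
by rewrite ?(mul0r, invr0, mulr0, invr1, mulr1, invrN, mulrN, opprK, rpred0, rpred1, rpredN).
Qed.

Theorem mainTheorem3 (m n : nat) (A : 'M[rat]_(m, n)) (i : 'I_m) :
  (2 <= m)%N ->
  \rank A = m ->
  (forall l : 'I_n, A i l \in [:: 0; 1; -1]) ->
  equimodular A <-> (forall j : 'I_n, A i j != 0 -> equimodular (trim A i j)).
Proof.
move=> _ rA signA; split=> [[_ eqA] j Aj | eqT].
  by split; [exact: rank_trim | exact: equinorm_trim].
suff le f g : minor A f != 0 -> minor A g != 0 -> `|minor A f| <= `|minor A g|.
  by split=> // f g Af Ag; apply/eqP; rewrite eq_le !le.
move=> Af Ag; have [k] := det_neq0_cofactor i Af.
rewrite mxE mulf_eq0 negb_or => /andP[Aj _].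
have [_ eqTj] := eqT _ Aj.
have intP l : A i l / A i (f k) \is a Num.int by apply: int_div_sign_entries.
by have := minor_norm_le_through_pivot_col Aj intP eqTj (erefl (f k)) Af Ag.
Qed.
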